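(* For any $f\in\mathcal{C}(I)$ and integers $l,m\ge0$, $\operatorname{dist}\big(f,\mathcal{R}^\alpha_{l,m}(I)\big)\le\operatorname{dist}\big(f,\mathcal{R}_{l,m}(I)\big)$.
   Context: $I=[x_0,x_N]$ is a compact interval, $\mathcal{C}(I)$ the real continuous functions with sup norm, $\Delta=\{x_0<x_1<\dots<x_N\}$, $N\ge2$, a fixed partition, $I_i=[x_{i-1},x_i]$, $L_i(x)=a_ix+b_i$ the affine map of $I$ onto $I_i$ with $L_i(x_0)=x_{i-1}$, $L_i(x_N)=x_i$; $\alpha\in(-1,1)^N$ fixed. For $f,b\in\mathcal{C}(I)$ with $b(x_0)=f(x_0)$, $b(x_N)=f(x_N)$, $f^\alpha_{\Delta,b}$ is the unique $g\in\mathcal{C}(I)$ with $g(x)=f(x)+\alpha_i(g-b)(L_i^{-1}(x))$ for $x\in I_i$. $B_n$ is the Bernstein operator $B_nf(x)=\sum_{k=0}^n f\big(x_0+\tfrac kn(x_N-x_0)\big)\binom nk\frac{(x-x_0)^k(x_N-x)^{n-k}}{(x_N-x_0)^n}$, and $\mathcal{F}^\alpha_{\Delta,B_n}(f)=f^\alpha_{\Delta,B_nf}$. $\mathcal{P}_k(I)$ = real algebraic polynomials of degree $\le k$; $\mathcal{R}_{l,m}(I)=\{p/q:p\in\mathcal{P}_l(I),q\in\mathcal{P}_m(I),q>0\text{ on }I\}$; $\mathcal{R}^\alpha_{l,m}(I)=\{\mathcal{F}^\alpha_{\Delta,B_n}(r):r\in\mathcal{R}_{l,m}(I),n\in\mathbb{N}\}$;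 $\operatorname{dist}(f,S)=\inf\{\|f-s\|_\infty:s\in S\}$. *)

From Stdlib Require Import Reals Lra ClassicalEpsilon.
Open Scope R_scope.

(* Supremum / infimum of a set of reals, chosen classically
   (arbitrary value if no least upper bound exists). *)
Definition Rsup (P : R -> Prop) : R := epsilon (inhabits 0) (is_lub P).
Definition Rinf (P : R -> Prop) : R := - Rsup (fun y => P (- y)).

Section Setting.

(* continuity on the compact interval [a,b] (functions R -> R, values outside
   [a,b] are irrelevant) *)
Definition cont_on (a b : R) (f : R -> R) : Prop :=
  forall x, a <= x <= b -> forall eps, 0 < eps ->
    exists delta, 0 < delta /\
      forall y, a <= y <= b -> Rabs (y - x) < delta -> Rabs (f y - f x) < eps.

Definition sup_norm (a b : R) (g : R -> R) : R :=
  Rsup (fun y => exists x, a <= x <= b /\ y = Rabs (g x)).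

Definition dist_to (a b : R) (f : R -> R) (S : (R -> R) -> Prop) : R :=
  Rinf (fun d => exists s, S s /\ d = sup_norm a b (fun x => f x - s x)).

End Setting.

Definition is_partition (x : nat -> R) (N : nat) : Prop :=
  (2 <= N)%nat /\ forall i, (i < N)%nat -> x i < x (S i).

(* L_i^{-1} : I_i -> I, inverse of L_i(t) = a_i t + b_i with
   L_i(x_0) = x_{i-1}, L_i(x_N) = x_i. *)
Definition Linv (x : nat -> R) (N i : nat) (t : R) : R :=
  x 0%nat + (t - x (i - 1)%nat) * (x N - x 0%nat) / (x i - x (i - 1)%nat).

Definition is_fractal (x : nat -> R) (N : nat) (alpha : nat -> R)
  (f b g : R -> R) : Prop :=
  cont_on (x 0%nat) (x N) g /\
  forall i, (1 <= i <= N)%nat -> forall t, x (i - 1)%nat <= t <= x i ->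
    g t = f t + alpha i * (g (Linv x N i t) - b (Linv x N i t)).

Definition fractal (x : nat -> R) (N : nat) (alpha : nat -> R)
  (f b : R -> R) : R -> R :=
  epsilon (inhabits (fun _ => 0)) (is_fractal x N alpha f b).

Definition bernstein (a b : R) (n : nat) (f : R -> R) (t : R) : R :=
  sum_f_R0 (fun k => f (a + INR k / INR n * (b - a)) * C n k
                     * (t - a) ^ k * (b - t) ^ (n - k) / (b - a) ^ n) n.

Definition fractal_bernstein (x : nat -> R) (N : nat) (alpha : nat -> R)
  (n : nat) (f : R -> R) : R -> R :=
  fractal x N alpha f (bernstein (x 0%nat) (x N) n f).

Definition is_poly (k : nat) (p : R -> R) : Prop :=
  exists c : nat -> R, forall t, p t = sum_f_R0 (fun j => c j * t ^ j) k.

Definition rat_class (a b : R) (l m : nat) (r : R -> R) : Prop :=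
  exists p q, is_poly l p /\ is_poly m q /\
    (forall t, a <= t <= b -> 0 < q t) /\ r = (fun t => p t / q t).

Definition frat_class (x : nat -> R) (N : nat) (alpha : nat -> R)
  (l m : nat) (s : R -> R) : Prop :=
  exists r n, rat_class (x 0%nat) (x N) l m r /\ (1 <= n)%nat /\
    s = fractal_bernstein x N alpha n r.

(* For a base function b continuous on I and agreeing with f at its ends,
   the fractal function f^alpha_{Delta,b} is the fixed point of the
   Read-Bajraktarevic operator  T g = f + alpha_i (g - b) o L_i^{-1}  on I_i,
   a contraction of ratio A = max |alpha_i| < 1 for the sup norm.  Any fixed
   point g satisfies ||g - f|| <= A ||f - b|| / (1 - A).  Taking f := r rational
   and b := B_n r, and using that Bernstein polynomials converge uniformly, the
   fractal rational functions F^alpha_{Delta,B_n}(r) converge uniformly to r.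
   Hence every distance ||f - r|| with r in R_{l,m} is approached by distances to
   R^alpha_{l,m}, which gives the inequality between the two infima. *)

From Stdlib Require Import Reals Lra Lia ClassicalEpsilon FunctionalExtensionality.
Open Scope R_scope.

Lemma Rsup_spec (P : R -> Prop) :
  (exists y, P y) -> (exists M, forall y, P y -> y <= M) -> is_lub P (Rsup P).
Proof.
  intros Hne [M HM]. unfold Rsup. apply epsilon_spec.
  destruct (completeness P) as [s Hs]; [exists M; exact HM | exact Hne |].
  now exists s.
Qed.

Lemma sup_norm_spec a b g c : a <= b ->
  (forall t, a <= t <= b -> Rabs (g t) <= c) ->
  (forall t, a <= t <= b -> Rabs (g t) <= sup_norm a b g) /\
  sup_norm a b g <= c /\ 0 <= sup_norm a b g.
Proof.
  intros Hab Hc.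
  destruct (Rsup_spec (fun y => exists t, a <= t <= b /\ y = Rabs (g t)))
    as [Hub Hleast].
  - exists (Rabs (g a)), a. split; [lra | reflexivity].
  - exists c. intros y [t [Ht ->]]. auto.
  - assert (Hdom : forall t, a <= t <= b -> Rabs (g t) <= sup_norm a b g)
      by (intros t Ht; apply Hub; exists t; auto).
    split; [exact Hdom | split].
    + apply Hleast. intros y [t [Ht ->]]. auto.
    + apply Rle_trans with (Rabs (g a)); [apply Rabs_pos | apply Hdom; lra].
Qed.

Lemma Rinf_spec (P : R -> Prop) : (exists d, P d) -> (forall d, P d -> 0 <= d) ->
  (forall d, P d -> Rinf P <= d) /\
  (forall c, (forall d, P d -> c <= d) -> c <= Rinf P).
Proof.
  intros [d0 Hd0] Hpos. unfold Rinf.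
  destruct (Rsup_spec (fun y => P (- y))) as [Hub Hleast].
  - exists (- d0). now rewrite Ropp_involutive.
  - exists 0. intros y Hy. specialize (Hpos _ Hy). lra.
  - split.
    + intros d Hd. assert (- d <= Rsup (fun y => P (- y)))
        by (apply Hub; now rewrite Ropp_involutive). lra.
    + intros c Hc. assert (Rsup (fun y => P (- y)) <= - c)
        by (apply Hleast; intros y Hy; specialize (Hc _ Hy); lra). lra.
Qed.

Lemma Rabs_tri u v w : Rabs (u - w) <= Rabs (u - v) + Rabs (v - w).
Proof. replace (u - w) with ((u - v) + (v - w)) by ring. apply Rabs_triang. Qed.

(* Projection of R onto [a,b]; it lets us move between [cont_on a b] and the
   global [continuity_pt] of the standard library. *)
Definition clamp (a b t : R) : R := Rmax a (Rmin b t).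

Lemma clamp_in a b t : a <= b -> a <= clamp a b t <= b.
Proof. intros. unfold clamp, Rmax, Rmin. repeat destruct Rle_dec; lra. Qed.

Lemma clamp_id a b t : a <= t <= b -> clamp a b t = t.
Proof. intros. unfold clamp, Rmax, Rmin. repeat destruct Rle_dec; lra. Qed.

Lemma clamp_lip a b s t : a <= b -> Rabs (clamp a b s - clamp a b t) <= Rabs (s - t).
Proof.
  intros. unfold clamp, Rmax, Rmin.
  repeat destruct Rle_dec; unfold Rabs; repeat destruct Rcase_abs; lra.
Qed.

Lemma cont_on_ext a b g h : (forall t, a <= t <= b -> g t = h t) ->
  cont_on a b g -> cont_on a b h.
Proof.
  intros He Hg t Ht eps Heps. destruct (Hg t Ht eps Heps) as [d [Hd Hdd]].
  exists d. split; [exact Hd |]. intros y Hy Hyt. rewrite <- !He by auto. auto.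
Qed.

Lemma cont_on_of_continuity a b g :
  (forall t, a <= t <= b -> continuity_pt g t) -> cont_on a b g.
Proof.
  intros Hg t Ht eps Heps. destruct (Hg t Ht eps Heps) as [d [Hd Hdd]].
  exists d. split; [exact Hd |]. intros y Hy Hyt.
  destruct (Req_dec y t) as [-> | Hne].
  - rewrite Rminus_diag, Rabs_R0. exact Heps.
  - apply (Hdd y). split; [split; [exact I | auto] | exact Hyt].
Qed.

Lemma cont_on_iff a b g : a <= b ->
  cont_on a b g <-> forall t, continuity_pt (fun s => g (clamp a b s)) t.
Proof.
  intros Hab. split.
  - intros Hg t eps Heps.
    destruct (Hg (clamp a b t) (clamp_in a b t Hab) eps Heps) as [d [Hd Hdd]].
    exists d. split; [exact Hd |]. intros y [_ Hy]. simpl in *. unfold R_dist in *.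
    apply Hdd; [apply clamp_in; exact Hab |].
    eapply Rle_lt_trans; [apply clamp_lip; exact Hab | exact Hy].
  - intros Hg. apply cont_on_ext with (fun s => g (clamp a b s));
      [intros; now rewrite clamp_id |].
    apply cont_on_of_continuity. auto.
Qed.

Lemma cont_bounded a b g : a <= b -> cont_on a b g ->
  exists M, forall t, a <= t <= b -> Rabs (g t) <= M.
Proof.
  intros Hab Hg. rewrite (cont_on_iff a b g Hab) in Hg.
  destruct (continuity_ab_maj (fun s => Rabs (g (clamp a b s))) a b Hab)
    as [tM [HM _]].
  - intros s _. apply (continuity_pt_comp (fun s => g (clamp a b s)) Rabs);
      [apply Hg | apply Rcontinuity_abs].
  - exists (Rabs (g (clamp a b tM))). intros t Ht.
    specialize (HM t Ht). simpl in HM. now rewrite clamp_id in HM.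
Qed.

Lemma cont_on_unif a b g : a <= b -> cont_on a b g -> forall eps, 0 < eps ->
  exists d, 0 < d /\ forall s t, a <= s <= b -> a <= t <= b ->
    Rabs (s - t) < d -> Rabs (g s - g t) < eps.
Proof.
  intros Hab Hg eps Heps. rewrite (cont_on_iff a b g Hab) in Hg.
  destruct (Heine (fun s => g (clamp a b s)) (fun c => a <= c <= b)
     (compact_P3 a b) (fun t _ => Hg t) (mkposreal eps Heps)) as [d Hd].
  exists d. split; [apply cond_pos |]. intros s t Hs Ht Hst.
  specialize (Hd s t Hs Ht Hst). simpl in Hd. now rewrite !clamp_id in Hd.
Qed.

Lemma cont_on_plus a b g h : a <= b -> cont_on a b g -> cont_on a b h ->
  cont_on a b (fun t => g t + h t).
Proof.
  intros Hab Hg Hh. rewrite cont_on_iff in * by exact Hab. intros t.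
  apply (continuity_pt_plus (fun s => g (clamp a b s)) (fun s => h (clamp a b s)));
    auto.
Qed.

Lemma cont_on_minus a b g h : a <= b -> cont_on a b g -> cont_on a b h ->
  cont_on a b (fun t => g t - h t).
Proof.
  intros Hab Hg Hh. rewrite cont_on_iff in * by exact Hab. intros t.
  apply (continuity_pt_minus (fun s => g (clamp a b s)) (fun s => h (clamp a b s)));
    auto.
Qed.

Lemma cont_on_scal a b c g : a <= b -> cont_on a b g -> cont_on a b (fun t => c * g t).
Proof.
  intros Hab Hg. rewrite cont_on_iff in * by exact Hab. intros t.
  apply (continuity_pt_scal (fun s => g (clamp a b s))). auto.
Qed.

Lemma cont_on_sub a b c d g : a <= c -> d <= b -> cont_on a b g -> cont_on c d g.
Proof.
  intros Hac Hdb Hg t Ht eps Heps. destruct (Hg t ltac:(lra) eps Heps) as [e [He Hee]].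
  exists e. split; [exact He |]. intros y Hy. apply Hee. lra.
Qed.

Lemma cont_on_comp a b c d (phi g : R -> R) :
  (forall t, c <= t <= d -> a <= phi t <= b) ->
  cont_on c d phi -> cont_on a b g -> cont_on c d (fun t => g (phi t)).
Proof.
  intros Hmap Hphi Hg t Ht eps Heps.
  destruct (Hg (phi t) (Hmap t Ht) eps Heps) as [e [He Hee]].
  destruct (Hphi t Ht e He) as [dl [Hdl Hdd]].
  exists dl. split; [exact Hdl |]. intros y Hy Hyt. apply Hee; auto.
Qed.

Lemma cont_on_glue a b c g : a <= b <= c ->
  cont_on a b g -> cont_on b c g -> cont_on a c g.
Proof.
  intros Hb Hl Hr t Ht eps Heps.
  destruct (Rlt_le_dec t b) as [Htb | Hbt].
  - destruct (Hl t ltac:(lra) eps Heps) as [d [Hd Hdd]].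
    exists (Rmin d (b - t)). split; [apply Rmin_pos; lra |].
    intros y Hy Hyt. apply Rabs_def2 in Hyt as [Hyt1 Hyt2].
    pose proof (Rmin_l d (b - t)). pose proof (Rmin_r d (b - t)).
    apply Hdd; [lra | apply Rabs_def1; lra].
  - destruct (Hr t ltac:(lra) eps Heps) as [dr [Hdr Hddr]].
    destruct (Rle_lt_dec t b) as [Htb | Hbt'].
    + destruct (Hl t ltac:(lra) eps Heps) as [dl [Hdl Hddl]].
      exists (Rmin dl dr). split; [apply Rmin_pos; lra |].
      intros y Hy Hyt. apply Rabs_def2 in Hyt as [Hyt1 Hyt2].
      pose proof (Rmin_l dl dr). pose proof (Rmin_r dl dr).
      destruct (Rle_dec y b); [apply Hddl | apply Hddr]; try lra; apply Rabs_def1; lra.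
    + exists (Rmin dr (t - b)). split; [apply Rmin_pos; lra |].
      intros y Hy Hyt. apply Rabs_def2 in Hyt as [Hyt1 Hyt2].
      pose proof (Rmin_l dr (t - b)). pose proof (Rmin_r dr (t - b)).
      apply Hddr; [lra | apply Rabs_def1; lra].
Qed.

Lemma uniform_limit a b (G : nat -> R -> R) (e : nat -> R) :
  (forall k, cont_on a b (G k)) -> Un_cv e 0 ->
  (forall n k t, (k <= n)%nat -> a <= t <= b -> Rabs (G n t - G k t) <= e k) ->
  exists g, cont_on a b g /\
    forall k t, a <= t <= b -> Rabs (g t - G k t) <= e k.
Proof.
  intros Hcont He Hcau.
  assert (Hsmall : forall eps, 0 < eps -> exists k, e k < eps).
  { intros eps Heps. destruct (He eps Heps) as [k Hk]. exists k.
    specialize (Hk k (le_n k)). unfold R_dist in Hk. rewrite Rminus_0_r in Hk.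
    pose proof (Rle_abs (e k)). lra. }
  set (g t := epsilon (inhabits 0) (Un_cv (fun k => G k t))).
  assert (Hcv : forall t, a <= t <= b -> Un_cv (fun k => G k t) (g t)).
  { intros t Ht. apply epsilon_spec.
    destruct (R_complete (fun k => G k t)) as [l Hl]; [| now exists l].
    intros eps Heps. destruct (He (eps / 2)) as [k Hk]; [lra |].
    exists k. intros n p Hn Hp. unfold R_dist in *.
    specialize (Hk k (le_n k)). rewrite Rminus_0_r in Hk.
    pose proof (Rle_abs (e k)).
    pose proof (Hcau n k t Hn Ht). pose proof (Hcau p k t Hp Ht).
    pose proof (Rabs_tri (G n t) (G k t) (G p t)).
    rewrite (Rabs_minus_sym (G k t)) in *. lra. }
  assert (Hrate : forall k t, a <= t <= b -> Rabs (g t - G k t) <= e k).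
  { intros k t Ht. apply Rle_plus_epsilon. intros eps Heps.
    destruct (Hcv t Ht eps Heps) as [n0 Hn0].
    specialize (Hn0 (Nat.max n0 k) ltac:(lia)). unfold R_dist in Hn0.
    pose proof (Hcau (Nat.max n0 k) k t ltac:(lia) Ht).
    pose proof (Rabs_tri (g t) (G (Nat.max n0 k) t) (G k t)).
    rewrite Rabs_minus_sym in Hn0. lra. }
  exists g. split; [| exact Hrate].
  intros t Ht eps Heps. destruct (Hsmall (eps / 3)) as [k Hk]; [lra |].
  destruct (Hcont k t Ht (eps / 3)) as [d [Hd Hdd]]; [lra |].
  exists d. split; [exact Hd |]. intros y Hy Hyt.
  pose proof (Hdd y Hy Hyt). pose proof (Hrate k y Hy). pose proof (Hrate k t Ht).
  pose proof (Rabs_tri (g y) (G k y) (g t)).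
  pose proof (Rabs_tri (G k y) (G k t) (g t)).
  rewrite (Rabs_minus_sym (G k t)) in *. lra.
Qed.

Lemma geometric_cv0 (c A : R) : 0 <= A < 1 -> Un_cv (fun k => c * A ^ k) 0.
Proof.
  intros HA eps Heps.
  destruct (pow_lt_1_zero A ltac:(rewrite Rabs_pos_eq; lra) (eps / (Rabs c + 1)))
    as [k0 Hk0].
  { apply Rdiv_lt_0_compat; [exact Heps |]. pose proof (Rabs_pos c). lra. }
  exists k0. intros k Hk. unfold R_dist. rewrite Rminus_0_r, Rabs_mult.
  specialize (Hk0 k Hk). pose proof (Rabs_pos c). pose proof (Rabs_pos (A ^ k)).
  apply Rle_lt_trans with ((Rabs c + 1) * Rabs (A ^ k)); [nra |].
  replace eps with ((Rabs c + 1) * (eps / (Rabs c + 1))) by (field; lra).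
  apply Rmult_lt_compat_l; lra.
Qed.

Lemma Rabs_le_cv0 d (e : nat -> R) : Un_cv e 0 -> (forall k, Rabs d <= e k) -> d = 0.
Proof.
  intros He Hd. destruct (Req_dec d 0) as [| Hne]; [assumption | exfalso].
  destruct (He (Rabs d)) as [k Hk]; [apply Rabs_pos_lt; exact Hne |].
  specialize (Hk k (le_n k)). specialize (Hd k). unfold R_dist in Hk.
  rewrite Rminus_0_r in Hk. pose proof (Rle_abs (e k)). lra.
Qed.

Lemma part_mono x N : is_partition x N -> forall i j, (i <= j <= N)%nat -> x i <= x j.
Proof.
  intros [_ Hinc] i j. induction j as [| j IH]; intros Hij.
  - replace i with 0%nat by lia. lra.
  - destruct (Nat.eq_dec i (S j)) as [-> | Hne]; [lra |].
    assert (x i <= x j) by (apply IH; lia).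
    assert (x j < x (S j)) by (apply Hinc; lia). lra.
Qed.

Lemma part_ab x N : is_partition x N -> x 0%nat < x N.
Proof.
  intros Hp. pose proof Hp as [HN Hinc].
  assert (x 0%nat < x 1%nat) by (apply Hinc; lia).
  assert (x 1%nat <= x N) by (apply (part_mono x N Hp); lia). lra.
Qed.

Lemma part_piece x N i : is_partition x N -> (1 <= i <= N)%nat ->
  x 0%nat <= x (i - 1)%nat /\ x (i - 1)%nat < x i /\ x i <= x N.
Proof.
  intros Hp Hi. pose proof Hp as [_ Hinc].
  split; [apply (part_mono x N Hp); lia |]. split.
  - replace i with (S (i - 1)) at 2 by lia. apply Hinc. lia.
  - apply (part_mono x N Hp). lia.
Qed.

Lemma Linv_left x N i : is_partition x N -> (1 <= i <= N)%nat ->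
  Linv x N i (x (i - 1)%nat) = x 0%nat.
Proof.
  intros Hp Hi. destruct (part_piece x N i Hp Hi) as [_ [H _]]. unfold Linv. field. lra.
Qed.

Lemma Linv_right x N i : is_partition x N -> (1 <= i <= N)%nat ->
  Linv x N i (x i) = x N.
Proof.
  intros Hp Hi. destruct (part_piece x N i Hp Hi) as [_ [H _]]. unfold Linv. field. lra.
Qed.

Lemma Linv_range x N i t : is_partition x N -> (1 <= i <= N)%nat ->
  x (i - 1)%nat <= t <= x i -> x 0%nat <= Linv x N i t <= x N.
Proof.
  intros Hp Hi Ht. destruct (part_piece x N i Hp Hi) as [_ [Hlt _]].
  pose proof (part_ab x N Hp) as Hab.
  set (p := x (i - 1)%nat) in *. set (q := x i) in *.
  assert (Hs : 0 <= (t - p) / (q - p) <= 1).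
  { split.
    - apply Rle_mult_inv_pos; lra.
    - apply Rmult_le_reg_r with (q - p); [lra |].
      unfold Rdiv. rewrite Rmult_assoc, Rinv_l by lra. lra. }
  unfold Linv. fold p q.
  replace ((t - p) * (x N - x 0%nat) / (q - p)) with
    ((x N - x 0%nat) * ((t - p) / (q - p))) by (field; lra).
  nra.
Qed.

Lemma Linv_cont x N i a b : cont_on a b (Linv x N i).
Proof. apply cont_on_of_continuity. intros t _. unfold Linv. reg. Qed.

Fixpoint locate (x : nat -> R) (t : R) (i n : nat) : nat :=
  match n with
  | O => i
  | S n' => if Rle_dec t (x i) then i else locate x t (S i) n'
  end.

Definition piece_of (x : nat -> R) (N : nat) (t : R) : nat := locate x t 1 (N - 1).

Lemma locate_spec x t : forall n i, (1 <= i)%nat ->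
  x (i - 1)%nat <= t <= x (i + n)%nat ->
  (i <= locate x t i n <= i + n)%nat /\
  x (locate x t i n - 1)%nat <= t <= x (locate x t i n).
Proof.
  induction n as [| n IH]; intros i Hi Ht; simpl.
  - rewrite Nat.add_0_r in *. split; [lia | lra].
  - destruct (Rle_dec t (x i)) as [Hle | Hgt]; [split; [lia | lra] |].
    destruct (IH (S i)) as [Hr Hs]; [lia | |].
    + replace (S i - 1)%nat with i by lia. replace (S i + n)%nat with (i + S n)%nat by lia.
      lra.
    + split; [lia | exact Hs].
Qed.

Lemma piece_of_spec x N t : is_partition x N -> x 0%nat <= t <= x N ->
  (1 <= piece_of x N t <= N)%nat /\
  x (piece_of x N t - 1)%nat <= t <= x (piece_of x N t).
Proof.
  intros [HN _] Ht. unfold piece_of.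
  destruct (locate_spec x t (N - 1) 1) as [Hr Hs]; [lia | |].
  - replace (1 + (N - 1))%nat with N by lia. simpl. lra.
  - split; [lia | exact Hs].
Qed.

(* [amax alpha k] = max(|alpha_1|, ..., |alpha_k|): the contraction ratio of the
   Read-Bajraktarevic operator. *)
Fixpoint amax (alpha : nat -> R) (k : nat) : R :=
  match k with
  | O => 0
  | S k' => Rmax (Rabs (alpha (S k'))) (amax alpha k')
  end.

Lemma amax_ge alpha k :
  0 <= amax alpha k /\ forall i, (1 <= i <= k)%nat -> Rabs (alpha i) <= amax alpha k.
Proof.
  induction k as [| k [IH1 IH2]]; simpl; [split; [lra | intros; lia] |].
  split; [apply Rle_trans with (amax alpha k); [exact IH1 | apply Rmax_r] |].
  intros i Hi. destruct (Nat.eq_dec i (S k)) as [-> | Hne]; [apply Rmax_l |].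
  apply Rle_trans with (amax alpha k); [apply IH2; lia | apply Rmax_r].
Qed.

Lemma amax_lt1 alpha k : (forall i, (1 <= i <= k)%nat -> -1 < alpha i < 1) ->
  amax alpha k < 1.
Proof.
  induction k as [| k IH]; intros H; simpl; [lra |].
  apply Rmax_lub_lt; [| apply IH; intros; apply H; lia].
  destruct (H (S k)) as [H1 H2]; [lia |]. apply Rabs_def1; lra.
Qed.

Section ReadBajraktarevic.

Variables (x : nat -> R) (N : nat) (alpha : nat -> R) (f b : R -> R).
Hypothesis Hpart : is_partition x N.
Hypothesis Halpha : forall i, (1 <= i <= N)%nat -> -1 < alpha i < 1.
Hypothesis Hf : cont_on (x 0%nat) (x N) f.
Hypothesis Hb : cont_on (x 0%nat) (x N) b.
Hypothesis Hb0 : b (x 0%nat) = f (x 0%nat).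
Hypothesis HbN : b (x N) = f (x N).

Local Notation x0 := (x 0%nat).
Local Notation xN := (x N).
Local Notation A := (amax alpha N).

Let Hab : x0 <= xN.
Proof. left. apply part_ab. exact Hpart. Qed.

Let HA : 0 <= A < 1.
Proof. split; [apply amax_ge | apply amax_lt1; exact Halpha]. Qed.

(* g agrees with b at both ends of I; this makes consecutive pieces of the
   operator match at the interior nodes. *)
Definition fits_ends (g : R -> R) : Prop := g x0 = b x0 /\ g xN = b xN.

Definition rb_piece (g : R -> R) (i : nat) (t : R) : R :=
  f t + alpha i * (g (Linv x N i t) - b (Linv x N i t)).

(* The Read-Bajraktarevic operator: on I_i it is the i-th piece. Its continuous
   fixed points are exactly the fractal functions f^alpha_{Delta,b}. *)
Definition rb_op (g : R -> R) (t : R) : R := rb_piece g (piece_of x N t) t.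

Lemma rb_piece_ends g i : fits_ends g -> (1 <= i <= N)%nat ->
  rb_piece g i (x (i - 1)%nat) = f (x (i - 1)%nat) /\ rb_piece g i (x i) = f (x i).
Proof.
  intros [Hg0 HgN] Hi. unfold rb_piece.
  rewrite Linv_left, Linv_right by assumption. rewrite Hg0, HgN. split; ring.
Qed.

(* The pieces agree at the nodes, so [rb_op] is the i-th piece on all of I_i. *)
Lemma rb_op_piece g i t : fits_ends g -> (1 <= i <= N)%nat ->
  x (i - 1)%nat <= t <= x i -> rb_op g t = rb_piece g i t.
Proof.
  intros Hg Hi Ht. destruct (part_piece x N i Hpart Hi) as [Hi0 [_ HiN]].
  destruct (piece_of_spec x N t Hpart ltac:(lra)) as [Hj Hjt].
  unfold rb_op. set (j := piece_of x N t) in *.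
  destruct (rb_piece_ends g i Hg Hi) as [Hil Hir].
  destruct (rb_piece_ends g j Hg Hj) as [Hjl Hjr].
  destruct (Compare_dec.lt_eq_lt_dec i j) as [[Hlt | ->] | Hgt]; [| reflexivity |].
  - assert (x i <= x (j - 1)%nat) by (apply (part_mono x N Hpart); lia).
    replace (x (j - 1)%nat) with t in Hjl by lra. replace (x i) with t in Hir by lra.
    congruence.
  - assert (x j <= x (i - 1)%nat) by (apply (part_mono x N Hpart); lia).
    replace (x (i - 1)%nat) with t in Hil by lra. replace (x j) with t in Hjr by lra.
    congruence.
Qed.

Lemma rb_piece_cont g i : cont_on x0 xN g -> (1 <= i <= N)%nat ->
  cont_on (x (i - 1)%nat) (x i) (rb_piece g i).
Proof.
  intros Hg Hi. destruct (part_piece x N i Hpart Hi) as [Hi0 [Hii HiN]].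
  assert (Hcomp : forall h, cont_on x0 xN h ->
             cont_on (x (i - 1)%nat) (x i) (fun t => h (Linv x N i t))).
  { intros h Hh. apply (cont_on_comp x0 xN); [| apply Linv_cont | exact Hh].
    intros t Ht. apply Linv_range; assumption. }
  apply cont_on_plus; [lra | apply (cont_on_sub x0 xN); [lra | lra | exact Hf] |].
  apply cont_on_scal; [lra |]. apply cont_on_minus; [lra | apply Hcomp; assumption ..].
Qed.

Lemma rb_op_cont g : fits_ends g -> cont_on x0 xN g -> cont_on x0 xN (rb_op g).
Proof.
  intros Hends Hg.
  assert (Hpieces : forall k, (1 <= k <= N)%nat -> cont_on x0 (x k) (rb_op g)).
  { induction k as [| k IH]; intros Hk; [lia |].
    assert (Hpiece : cont_on (x k) (x (S k)) (rb_op g)).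
    { apply cont_on_ext with (rb_piece g (S k)).
      - intros t Ht. symmetry. apply rb_op_piece; [exact Hends | lia |].
        replace (S k - 1)%nat with k by lia. exact Ht.
      - replace k with (S k - 1)%nat at 1 by lia. apply rb_piece_cont; [exact Hg | lia]. }
    destruct (Nat.eq_dec k 0) as [-> | Hk0]; [exact Hpiece |].
    apply cont_on_glue with (x k); [| apply IH; lia | exact Hpiece].
    split; apply (part_mono x N Hpart); lia. }
  apply Hpieces. destruct Hpart; lia.
Qed.

Lemma rb_op_fits g : fits_ends g -> fits_ends (rb_op g).
Proof.
  intros Hg. pose proof Hpart as [HN _].
  destruct (rb_piece_ends g 1 Hg ltac:(lia)) as [H1 _].
  destruct (rb_piece_ends g N Hg ltac:(lia)) as [_ H2].
  destruct (part_piece x N 1 Hpart ltac:(lia)) as [_ [Hlt1 _]]. simpl in H1, Hlt1.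
  destruct (part_piece x N N Hpart ltac:(lia)) as [_ [HltN _]].
  split.
  - rewrite (rb_op_piece g 1 x0 Hg ltac:(lia)) by (simpl; lra). rewrite H1. symmetry. exact Hb0.
  - rewrite (rb_op_piece g N xN Hg ltac:(lia)) by lra. rewrite H2. symmetry. exact HbN.
Qed.

Lemma rb_op_contr g h c : (forall s, x0 <= s <= xN -> Rabs (g s - h s) <= c) ->
  forall t, x0 <= t <= xN -> Rabs (rb_op g t - rb_op h t) <= A * c.
Proof.
  intros Hc t Ht. destruct (piece_of_spec x N t Hpart Ht) as [Hj Hjt].
  unfold rb_op, rb_piece. set (j := piece_of x N t) in *.
  set (L := Linv x N j t).
  replace (f t + alpha j * (g L - b L) - (f t + alpha j * (h L - b L)))
    with (alpha j * (g L - h L)) by ring.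
  rewrite Rabs_mult. apply Rmult_le_compat; try apply Rabs_pos.
  - apply amax_ge. exact Hj.
  - apply Hc. apply Linv_range; assumption.
Qed.

Definition rb_iter (k : nat) : R -> R := Nat.iter k rb_op f.

Lemma rb_iter_inv k : cont_on x0 xN (rb_iter k) /\ fits_ends (rb_iter k).
Proof.
  induction k as [| k [IHc IHe]]; simpl.
  - split; [exact Hf | split; symmetry; assumption].
  - split; [apply rb_op_cont | apply rb_op_fits]; assumption.
Qed.

Lemma rb_iter_cauchy M :
  (forall t, x0 <= t <= xN -> Rabs (rb_iter 1 t - rb_iter 0 t) <= M) ->
  forall n k t, (k <= n)%nat -> x0 <= t <= xN ->
  Rabs (rb_iter n t - rb_iter k t) <= M / (1 - A) * A ^ k.
Proof.
  intros HM.
  assert (Hstep : forall k t, x0 <= t <= xN ->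
            Rabs (rb_iter (S k) t - rb_iter k t) <= A ^ k * M).
  { induction k as [| k IH]; intros t Ht; [rewrite pow_O, Rmult_1_l; exact (HM t Ht) |].
    replace (A ^ S k * M) with (A * (A ^ k * M)) by (simpl; ring).
    apply rb_op_contr; assumption. }
  assert (HM0 : 0 <= M) by (eapply Rle_trans; [apply Rabs_pos | apply (HM x0); lra]).
  assert (Hsum : forall p k t, x0 <= t <= xN ->
    Rabs (rb_iter (k + p) t - rb_iter k t) <= M / (1 - A) * A ^ k * (1 - A ^ p)).
  { induction p as [| p IH]; intros k t Ht.
    - rewrite Nat.add_0_r, Rminus_diag, Rabs_R0. simpl. lra.
    - pose proof (Rabs_tri (rb_iter (k + S p) t) (rb_iter (k + p) t) (rb_iter k t)).
      pose proof (Hstep (k + p)%nat t Ht). pose proof (IH k t Ht).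
      rewrite Nat.add_succ_r, pow_add in *.
      replace (M / (1 - A) * A ^ k * (1 - A ^ S p)) with
        (A ^ k * A ^ p * M + M / (1 - A) * A ^ k * (1 - A ^ p))
        by (simpl; field; lra).
      lra. }
  intros n k t Hkn Ht. replace n with (k + (n - k))%nat by lia.
  eapply Rle_trans; [apply Hsum; exact Ht |].
  assert (0 <= A ^ (n - k)) by (apply pow_le; lra).
  assert (0 <= M / (1 - A) * A ^ k)
    by (apply Rmult_le_pos; [apply Rle_mult_inv_pos; lra | apply pow_le; lra]).
  nra.
Qed.

(* Existence of the fractal function: the iterates converge uniformly to a
   continuous fixed point of the operator. *)
Lemma fractal_exists : exists g, is_fractal x N alpha f b g.
Proof.
  destruct (rb_iter_inv 1) as [Hc1 _].
  destruct (cont_bounded x0 xN (fun t => rb_iter 1 t - rb_iter 0 t) Hab) as [M HM].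
  { apply cont_on_minus; [exact Hab | exact Hc1 | exact Hf]. }
  set (e k := M / (1 - A) * A ^ k).
  assert (He0 : Un_cv e 0) by (apply geometric_cv0; exact HA).
  destruct (uniform_limit x0 xN rb_iter e) as [g [Hg Hrate]];
    [intros k; apply rb_iter_inv | exact He0 | apply rb_iter_cauchy; exact HM |].
  exists g. split; [exact Hg |]. intros i Hi t Ht.
  destruct (part_piece x N i Hpart Hi) as [Hi0 [_ HiN]].
  set (L := Linv x N i t).
  assert (HL : x0 <= L <= xN) by (apply Linv_range; assumption).
  assert (Hai : Rabs (alpha i) <= 1) by (apply Rabs_le; specialize (Halpha i Hi); lra).
  assert (HM0 : 0 <= M) by (eapply Rle_trans; [apply Rabs_pos | apply (HM x0); lra]).
  (* on I_i, since T^(k+1) f = (i-th piece of T^k f):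
     |g t - (i-th piece of g) t| <= |g - T^(k+1) f| + |alpha_i| |T^k f - g| <= 2 e k *)
  apply Rminus_diag_uniq, (Rabs_le_cv0 _ (fun k => (2 * (M / (1 - A))) * A ^ k)).
  { apply geometric_cv0. exact HA. }
  intros k. destruct (rb_iter_inv k) as [_ Hek].
  assert (Hnext : rb_iter (S k) t = rb_piece (rb_iter k) i t)
    by (apply rb_op_piece; assumption).
  pose proof (Hrate (S k) t ltac:(lra)) as H1. rewrite Hnext in H1.
  pose proof (Hrate k L HL) as H2.
  assert (Hdecay : e (S k) <= e k).
  { unfold e. apply Rmult_le_compat_l; [apply Rle_mult_inv_pos; lra |].
    simpl. pose proof (pow_le A k (proj1 HA)). nra. }
  replace (2 * (M / (1 - A)) * A ^ k) with (e k + e k) by (unfold e; ring).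
  eapply Rle_trans; [apply (Rabs_tri _ (rb_piece (rb_iter k) i t)) |].
  apply Rplus_le_compat; [lra |]. unfold rb_piece. fold L.
  replace (f t + alpha i * (rb_iter k L - b L) - (f t + alpha i * (g L - b L)))
    with (alpha i * - (g L - rb_iter k L)) by ring.
  rewrite Rabs_mult, Rabs_Ropp. pose proof (Rabs_pos (g L - rb_iter k L)).
  apply Rle_trans with (1 * Rabs (g L - rb_iter k L)); [apply Rmult_le_compat_r |]; lra.
Qed.

Lemma fractal_spec : is_fractal x N alpha f b (fractal x N alpha f b).
Proof. unfold fractal. apply epsilon_spec, fractal_exists. Qed.

Lemma fractal_err g E : is_fractal x N alpha f b g ->
  (forall t, x0 <= t <= xN -> Rabs (f t - b t) <= E) ->
  forall t, x0 <= t <= xN -> Rabs (g t - f t) <= A * E / (1 - A).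
Proof.
  intros [Hg Hfix] HE.
  destruct (cont_bounded _ _ (fun t => g t - f t) Hab) as [M HM];
    [apply cont_on_minus; assumption |].
  destruct (sup_norm_spec _ _ (fun t => g t - f t) M Hab HM) as [Hdom _].
  set (D := sup_norm x0 xN (fun t => g t - f t)) in *.
  (* on I_j, g - f = alpha_j ((g - f) + (f - b)) o L_j^{-1}, so D <= A (D + E) *)
  assert (HD : D <= A * (D + E)).
  { apply (sup_norm_spec _ _ (fun t => g t - f t) (A * (D + E)) Hab).
    intros t Ht. destruct (piece_of_spec x N t Hpart Ht) as [Hj Hjt].
    set (j := piece_of x N t) in *. rewrite (Hfix j Hj t Hjt).
    set (L := Linv x N j t).
    assert (HL : x0 <= L <= xN) by (apply Linv_range; assumption).
    replace (f t + alpha j * (g L - b L) - f t)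
      with (alpha j * ((g L - f L) + (f L - b L))) by ring.
    rewrite Rabs_mult. apply Rmult_le_compat; try apply Rabs_pos.
    - apply amax_ge. exact Hj.
    - eapply Rle_trans; [apply Rabs_triang |].
      apply Rplus_le_compat; [apply Hdom | apply HE]; assumption. }
  intros t Ht. eapply Rle_trans; [apply Hdom; exact Ht |].
  apply Rmult_le_reg_r with (1 - A); [lra |].
  unfold Rdiv. rewrite Rmult_assoc, Rinv_l by lra. nra.
Qed.

End ReadBajraktarevic.

Lemma sum_cont (F : nat -> R -> R) n t : (forall k, continuity_pt (F k) t) ->
  continuity_pt (fun s => sum_f_R0 (fun k => F k s) n) t.
Proof.
  intros H. induction n as [| n IH]; simpl; [apply H |].
  apply (continuity_pt_plus (fun s => sum_f_R0 (fun k => F k s) n) (F (S n))); auto.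
Qed.

Lemma C_n_zero n : C n 0 = 1.
Proof. unfold C. rewrite Nat.sub_0_r. simpl. field. apply INR_fact_neq_0. Qed.

Lemma C_n_diag n : C n n = 1.
Proof. unfold C. rewrite Nat.sub_diag. simpl. field. apply INR_fact_neq_0. Qed.

Lemma C_nonneg n k : 0 <= C n k.
Proof.
  unfold C. apply Rle_mult_inv_pos; [apply pos_INR |].
  apply Rmult_lt_0_compat; apply INR_fact_lt_0.
Qed.

Lemma C_absorb m k : (k <= m)%nat -> INR (S k) * C (S m) (S k) = INR (S m) * C m k.
Proof.
  intros Hk. unfold C. replace (S m - S k)%nat with (m - k)%nat by lia.
  change (Factorial.fact (S m)) with (S m * Factorial.fact m)%nat.
  change (Factorial.fact (S k)) with (S k * Factorial.fact k)%nat.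
  rewrite !mult_INR. field.
  repeat split; try apply INR_fact_neq_0. apply not_0_INR. lia.
Qed.

(* Binomial weights C(n,k) u^k v^(n-k); with u = t - a, v = b - t they are, up to
   the factor (b-a)^n, the Bernstein basis polynomials. *)
Definition bweight (n : nat) (u v : R) (k : nat) : R := C n k * u ^ k * v ^ (n - k).

Lemma bweight_sum n u v : sum_f_R0 (bweight n u v) n = (u + v) ^ n.
Proof. symmetry. apply binomial. Qed.

Lemma bweight_mean m u v :
  sum_f_R0 (fun k => INR k * bweight (S m) u v k) (S m) = INR (S m) * u * (u + v) ^ m.
Proof.
  rewrite decomp_sum by lia. simpl pred. rewrite Rmult_0_l, Rplus_0_l.
  rewrite (sum_eq _ (fun k => bweight m u v k * (INR (S m) * u))).
  - rewrite <- scal_sum, bweight_sum. ring.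
  - intros k Hk. unfold bweight. replace (S m - S k)%nat with (m - k)%nat by lia.
    rewrite <- !Rmult_assoc, C_absorb by exact Hk. simpl pow. ring.
Qed.

(* Second moment: sum_k k^2 w_k = (m+1) u (m u (u+v)^(m-1) + (u+v)^m), written
   without negative exponents. *)
Lemma bweight_second m u v :
  sum_f_R0 (fun k => INR k * INR k * bweight (S m) u v k) (S m) * (u + v) =
  INR (S m) * u * (INR m * u * (u + v) ^ m + (u + v) ^ S m).
Proof.
  rewrite decomp_sum by lia. simpl pred. rewrite !Rmult_0_l, Rplus_0_l.
  rewrite (sum_eq _ (fun k => INR k * bweight m u v k * (INR (S m) * u)
                             + bweight m u v k * (INR (S m) * u))).
  - rewrite plus_sum, <- !scal_sum, bweight_sum.
    destruct m as [| m'].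
    + simpl. ring.
    + rewrite bweight_mean. simpl pow. ring.
  - intros k Hk. unfold bweight. replace (S m - S k)%nat with (m - k)%nat by lia.
    replace (INR (S k) * INR (S k) * (C (S m) (S k) * u ^ S k * v ^ (m - k)))
      with (INR (S k) * (INR (S k) * C (S m) (S k)) * u ^ S k * v ^ (m - k)) by ring.
    rewrite C_absorb by exact Hk. rewrite S_INR. simpl pow. ring.
Qed.

Lemma bweight_variance n u v : (1 <= n)%nat -> 0 < u + v ->
  sum_f_R0 (fun k => (INR k / INR n * (u + v) - u) ^ 2 * bweight n u v k) n =
  u * v / INR n * (u + v) ^ n.
Proof.
  intros Hn Hs. destruct n as [| m]; [lia |].
  assert (Hn0 : INR (S m) <> 0) by (apply not_0_INR; lia).
  set (c := (u + v) / INR (S m)).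
  rewrite (sum_eq _ (fun k => (INR k * INR k * bweight (S m) u v k * c ^ 2
                               + INR k * bweight (S m) u v k * (- 2 * u * c))
                              + bweight (S m) u v k * u ^ 2)).
  2: { intros k _. unfold c, Rdiv. ring. }
  rewrite !plus_sum, <- !scal_sum, bweight_sum, bweight_mean.
  assert (E2 := bweight_second m u v).
  set (S2 := sum_f_R0 (fun k => INR k * INR k * bweight (S m) u v k) (S m)) in *.
  replace S2 with (INR (S m) * u * (INR m * u * (u + v) ^ m + (u + v) ^ S m) / (u + v))
    by (rewrite <- E2; field; lra).
  unfold c. rewrite S_INR in *. simpl pow. field. lra.
Qed.

Definition bnode (a b : R) (n k : nat) : R := a + INR k / INR n * (b - a).
Definition bbasis (a b : R) (n : nat) (t : R) (k : nat) : R :=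
  bweight n (t - a) (b - t) k / (b - a) ^ n.

Lemma bernstein_expand a b n h t :
  bernstein a b n h t = sum_f_R0 (fun k => h (bnode a b n k) * bbasis a b n t k) n.
Proof. apply sum_eq. intros k _. unfold bbasis, bweight, bnode, Rdiv. ring. Qed.

Lemma bbasis_nonneg a b n t k : a < b -> a <= t <= b -> 0 <= bbasis a b n t k.
Proof.
  intros Hab Ht. unfold bbasis, bweight.
  apply Rle_mult_inv_pos; [| apply pow_lt; lra].
  apply Rmult_le_pos; [apply Rmult_le_pos; [apply C_nonneg |] |]; apply pow_le; lra.
Qed.

Lemma bbasis_sum a b n t : a < b -> sum_f_R0 (bbasis a b n t) n = 1.
Proof.
  intros Hab. unfold bbasis, Rdiv.
  rewrite <- scal_sum, bweight_sum. replace (t - a + (b - t)) with (b - a) by ring.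
  apply Rinv_l, pow_nonzero. lra.
Qed.

Lemma bbasis_variance a b n t : (1 <= n)%nat -> a < b ->
  sum_f_R0 (fun k => (bnode a b n k - t) ^ 2 * bbasis a b n t k) n =
  (t - a) * (b - t) / INR n.
Proof.
  intros Hn Hab. unfold bbasis, Rdiv.
  rewrite (sum_eq _ (fun k => (INR k / INR n * ((t - a) + (b - t)) - (t - a)) ^ 2
                              * bweight n (t - a) (b - t) k * / (b - a) ^ n)).
  2: { intros k _. unfold bnode. replace (t - a + (b - t)) with (b - a) by ring. ring. }
  rewrite <- scal_sum, bweight_variance by (assumption || lra).
  replace (t - a + (b - t)) with (b - a) by ring.
  field. split; [apply not_0_INR; lia | apply pow_nonzero; lra].
Qed.

Lemma modulus_quadratic (h : R -> R) M d e s t : Rabs (h s) <= M -> Rabs (h t) <= M ->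
  0 < d -> 0 <= e -> (Rabs (s - t) < d -> Rabs (h s - h t) < e) ->
  Rabs (h s - h t) <= e + 2 * M / d ^ 2 * (s - t) ^ 2.
Proof.
  intros Hs Ht Hd He Hmod.
  assert (Hd2 : 0 < d ^ 2) by (apply pow_lt; exact Hd).
  assert (Hq : 2 * M / d ^ 2 * (s - t) ^ 2 = 2 * M * ((s - t) ^ 2 / d ^ 2))
    by (field; lra).
  assert (Hq0 : 0 <= (s - t) ^ 2 / d ^ 2) by (apply Rle_mult_inv_pos; [apply pow2_ge_0 | lra]).
  pose proof (Rabs_pos (h s)). rewrite Hq.
  destruct (Rlt_dec (Rabs (s - t)) d) as [Hlt | Hge].
  - specialize (Hmod Hlt). nra.
  - assert (Hfar : 1 <= (s - t) ^ 2 / d ^ 2).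
    { apply Rmult_le_reg_r with (d ^ 2); [exact Hd2 |]. unfold Rdiv.
      rewrite Rmult_assoc, Rinv_l, Rmult_1_l, Rmult_1_r, <- (pow2_abs (s - t)) by lra.
      apply pow_incr. split; [lra | apply Rnot_lt_le; exact Hge]. }
    assert (Rabs (h s - h t) <= Rabs (h s) + Rabs (h t))
      by (unfold Rminus; rewrite <- (Rabs_Ropp (h t)); apply Rabs_triang).
    nra.
Qed.

Lemma bernstein_error a b n h M d e t : a < b -> (1 <= n)%nat -> 0 < d -> 0 <= e ->
  (forall s, a <= s <= b -> Rabs (h s) <= M) ->
  (forall s t, a <= s <= b -> a <= t <= b -> Rabs (s - t) < d -> Rabs (h s - h t) < e) ->
  a <= t <= b ->
  Rabs (bernstein a b n h t - h t) <= e + 2 * M / d ^ 2 * ((b - a) ^ 2 / INR n).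
Proof.
  intros Hab Hn Hd He HM Hmod Ht.
  assert (Hn0 : 0 < INR n) by (apply lt_0_INR; lia).
  assert (HM0 : 0 <= M) by (eapply Rle_trans; [apply Rabs_pos | apply (HM a); lra]).
  set (K := 2 * M / d ^ 2).
  assert (HK : 0 <= K) by (apply Rle_mult_inv_pos; [lra | apply pow_lt; exact Hd]).
  assert (Hdiff : bernstein a b n h t - h t =
            sum_f_R0 (fun k => (h (bnode a b n k) - h t) * bbasis a b n t k) n).
  { rewrite bernstein_expand, <- (Rmult_1_r (h t)) at 1.
    rewrite <- (bbasis_sum a b n t Hab), scal_sum, <- minus_sum.
    apply sum_eq. intros k _. ring. }
  rewrite Hdiff. eapply Rle_trans; [apply Rsum_abs |].
  eapply Rle_trans.
  { apply (sum_Rle _ (fun k => bbasis a b n t k * e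
                               + (bnode a b n k - t) ^ 2 * bbasis a b n t k * K)).
    intros k Hk. pose proof (bbasis_nonneg a b n t k Hab Ht).
    assert (Hnode : a <= bnode a b n k <= b).
    { assert (0 <= INR k / INR n <= 1).
      { split; [apply Rle_mult_inv_pos; [apply pos_INR | exact Hn0] |].
        apply Rmult_le_reg_r with (INR n); [exact Hn0 |]. unfold Rdiv.
        rewrite Rmult_assoc, Rinv_l, Rmult_1_l, Rmult_1_r by lra. apply le_INR, Hk. }
      unfold bnode. nra. }
    rewrite Rabs_mult, (Rabs_pos_eq (bbasis a b n t k)) by assumption.
    pose proof (modulus_quadratic h M d e (bnode a b n k) t (HM _ Hnode) (HM t Ht) Hd He
                  (Hmod _ t Hnode Ht)) as Hq.
    fold K in Hq. nra. }
  rewrite plus_sum, <- !scal_sum, bbasis_sum, bbasis_variance by assumption.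
  assert ((t - a) * (b - t) <= (b - a) ^ 2) by nra.
  assert ((t - a) * (b - t) / INR n <= (b - a) ^ 2 / INR n)
    by (apply Rmult_le_compat_r; [left; apply Rinv_0_lt_compat |]; assumption).
  fold K. nra.
Qed.

Lemma bernstein_converges a b h : a < b -> cont_on a b h -> forall eps, 0 < eps ->
  exists n, (1 <= n)%nat /\
    forall t, a <= t <= b -> Rabs (bernstein a b n h t - h t) <= eps.
Proof.
  intros Hab Hh eps Heps.
  destruct (cont_bounded a b h) as [M HM]; [lra | exact Hh |].
  destruct (cont_on_unif a b h ltac:(lra) Hh (eps / 2)) as [d [Hd Hmod]]; [lra |].
  assert (HM0 : 0 <= M) by (eapply Rle_trans; [apply Rabs_pos | apply (HM a); lra]).
  set (K := 2 * M / d ^ 2 * (b - a) ^ 2).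
  assert (HK : 0 <= K).
  { apply Rmult_le_pos; [apply Rle_mult_inv_pos; [lra | apply pow_lt; exact Hd] |].
    apply pow2_ge_0. }
  destruct (INR_archimed (eps / 2) K) as [n0 Hn0]; [lra |].
  exists (S n0). split; [lia |]. intros t Ht.
  assert (Hn : 0 < INR (S n0)) by (apply lt_0_INR; lia).
  assert (INR n0 <= INR (S n0)) by (apply le_INR; lia).
  eapply Rle_trans;
    [apply (bernstein_error a b (S n0) h M d (eps / 2)); (lia || lra || assumption) |].
  replace (2 * M / d ^ 2 * ((b - a) ^ 2 / INR (S n0))) with (K / INR (S n0))
    by (unfold K; field; split; lra).
  assert (K / INR (S n0) <= eps / 2).
  { apply Rmult_le_reg_r with (INR (S n0)); [exact Hn |]. unfold Rdiv.
    rewrite Rmult_assoc, Rinv_l by lra. nra. }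
  lra.
Qed.

Lemma bernstein_left a b n h : a < b -> (1 <= n)%nat -> bernstein a b n h a = h a.
Proof.
  intros Hab Hn. rewrite bernstein_expand, decomp_sum, sum_eq_R0 by
    (lia || (intros k _; unfold bbasis, bweight; rewrite Rminus_diag, pow_i by lia;
             unfold Rdiv; ring)).
  unfold bbasis, bnode, bweight. rewrite C_n_zero, Nat.sub_0_r, Rminus_diag. simpl INR.
  replace (a + 0 / INR n * (b - a)) with a by (field; apply not_0_INR; lia).
  field. apply pow_nonzero. lra.
Qed.

Lemma bernstein_right a b n h : a < b -> (1 <= n)%nat -> bernstein a b n h b = h b.
Proof.
  intros Hab Hn. destruct n as [| m]; [lia |]. rewrite bernstein_expand, tech5.
  rewrite sum_eq_R0.
  2: { intros k Hk. unfold bbasis, bweight.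
       rewrite Rminus_diag, (pow_i (S m - k)) by lia. unfold Rdiv. ring. }
  unfold bbasis, bnode, bweight. rewrite C_n_diag, Nat.sub_diag, Rminus_diag.
  replace (a + INR (S m) / INR (S m) * (b - a)) with b
    by (field; apply not_0_INR; lia).
  field. apply pow_nonzero. lra.
Qed.

Lemma bernstein_cont a b n h t : continuity_pt (bernstein a b n h) t.
Proof.
  unfold bernstein.
  apply (sum_cont (fun k s => h (a + INR k / INR n * (b - a)) * C n k * (s - a) ^ k
                              * (b - s) ^ (n - k) / (b - a) ^ n)).
  intros k. reg.
Qed.

Lemma sup_norm_diff a b f g : a <= b -> cont_on a b f -> cont_on a b g ->
  (forall t, a <= t <= b -> Rabs (f t - g t) <= sup_norm a b (fun t => f t - g t)) /\
  0 <= sup_norm a b (fun t => f t - g t).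
Proof.
  intros Hab Hf Hg.
  destruct (cont_bounded a b (fun t => f t - g t) Hab) as [M HM];
    [apply cont_on_minus; assumption |].
  destruct (sup_norm_spec a b _ M Hab HM) as [Hdom [_ Hpos]]. split; assumption.
Qed.

Lemma dist_to_approx a b f (S T : (R -> R) -> Prop) : a <= b -> cont_on a b f ->
  (forall s, S s -> cont_on a b s) -> (forall r, T r -> cont_on a b r) ->
  (exists r, T r) ->
  (forall r, T r -> forall eps, 0 < eps ->
     exists s, S s /\ forall t, a <= t <= b -> Rabs (s t - r t) <= eps) ->
  dist_to a b f S <= dist_to a b f T.
Proof.
  intros Hab Hf HS HT [r0 Hr0] Happrox. unfold dist_to.
  destruct (Rinf_spec (fun d => exists r, T r /\ d = sup_norm a b (fun t => f t - r t)))
    as [_ HglbT].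
  { exists (sup_norm a b (fun t => f t - r0 t)), r0. split; [exact Hr0 | reflexivity]. }
  { intros d [r [Hr ->]]. apply sup_norm_diff; auto. }
  destruct (Rinf_spec (fun d => exists s, S s /\ d = sup_norm a b (fun t => f t - s t)))
    as [HlbS _].
  { destruct (Happrox r0 Hr0 1) as [s [Hs _]]; [lra |].
    exists (sup_norm a b (fun t => f t - s t)), s. split; [exact Hs | reflexivity]. }
  { intros d [s [Hs ->]]. apply sup_norm_diff; auto. }
  apply HglbT. intros d [r [Hr ->]]. apply Rle_plus_epsilon. intros eps Heps.
  destruct (Happrox r Hr eps Heps) as [s [Hs Hsr]].
  eapply Rle_trans; [apply HlbS; exists s; split; [exact Hs | reflexivity] |].
  destruct (sup_norm_diff a b f r Hab Hf (HT r Hr)) as [Hdom _].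
  apply (sup_norm_spec a b (fun t => f t - s t)); [exact Hab |].
  intros t Ht. pose proof (Rabs_tri (f t) (r t) (s t)). specialize (Hdom t Ht).
  specialize (Hsr t Ht). rewrite Rabs_minus_sym in Hsr. lra.
Qed.

Lemma poly_cont k p t : is_poly k p -> continuity_pt p t.
Proof.
  intros [c Hc].
  replace p with (fun s => sum_f_R0 (fun j => c j * s ^ j) k)
    by (apply functional_extensionality; intros s; symmetry; apply Hc).
  apply (sum_cont (fun j s => c j * s ^ j)). intros j. reg.
Qed.

Lemma rat_cont a b l m r : rat_class a b l m r -> cont_on a b r.
Proof.
  intros [p [q [Hp [Hq [Hpos ->]]]]]. apply cont_on_of_continuity. intros t Ht.
  apply continuity_pt_div; [eapply poly_cont; eauto | eapply poly_cont; eauto |].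
  specialize (Hpos t Ht). lra.
Qed.

Lemma rat_class_nonempty a b l m : exists r, rat_class a b l m r.
Proof.
  exists (fun _ => 0 / 1), (fun _ => 0), (fun _ => 1). split; [| split; [| split]].
  - exists (fun _ => 0). intros t. symmetry. apply sum_eq_R0. intros; ring.
  - exists (fun j => match j with O => 1 | _ => 0 end). intros t.
    induction m as [| m IH]; [simpl; ring |]. rewrite tech5, <- IH. ring.
  - intros; lra.
  - reflexivity.
Qed.

Section FractalBernstein.

Variables (x : nat -> R) (N : nat) (alpha : nat -> R).
Hypothesis Hpart : is_partition x N.
Hypothesis Halpha : forall i, (1 <= i <= N)%nat -> -1 < alpha i < 1.

Local Notation x0 := (x 0%nat).
Local Notation xN := (x N).

Lemma fractal_bernstein_spec n r : cont_on x0 xN r -> (1 <= n)%nat ->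
  is_fractal x N alpha r (bernstein x0 xN n r) (fractal_bernstein x N alpha n r).
Proof.
  intros Hr Hn. pose proof (part_ab x N Hpart) as Hab.
  apply fractal_spec; try assumption.
  - apply cont_on_of_continuity. intros t _. apply bernstein_cont.
  - apply bernstein_left; assumption.
  - apply bernstein_right; assumption.
Qed.

Lemma frat_cont l m s : frat_class x N alpha l m s -> cont_on x0 xN s.
Proof.
  intros [r [n [Hr [Hn ->]]]]. apply fractal_bernstein_spec; [| exact Hn].
  eapply rat_cont. exact Hr.
Qed.

(* Every rational function r is a uniform limit of the fractal functions
   F^alpha_{Delta,B_n}(r): by the error bound they are within
   A ||r - B_n r|| / (1 - A) of r, and B_n r -> r uniformly. *)
Lemma fractal_bernstein_close l m r : rat_class x0 xN l m r ->
  forall eps, 0 < eps -> exists s, frat_class x N alpha l m s /\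
    forall t, x0 <= t <= xN -> Rabs (s t - r t) <= eps.
Proof.
  intros Hr eps Heps. pose proof (part_ab x N Hpart) as Hab.
  pose proof (rat_cont _ _ l m r Hr) as Hrc.
  assert (HA : 0 <= amax alpha N < 1)
    by (split; [apply amax_ge | apply amax_lt1; exact Halpha]).
  set (A := amax alpha N) in *.
  destruct (bernstein_converges x0 xN r Hab Hrc (eps * (1 - A))) as [n [Hn Hbn]].
  { apply Rmult_lt_0_compat; lra. }
  exists (fractal_bernstein x N alpha n r). split; [exists r, n; auto |].
  intros t Ht. eapply Rle_trans.
  - apply (fractal_err x N alpha r (bernstein x0 xN n r)); try assumption.
    + apply fractal_bernstein_spec; assumption.
    + intros s Hs. rewrite Rabs_minus_sym. apply Hbn. exact Hs.
  - fold A. replace (A * (eps * (1 - A)) / (1 - A)) with (A * eps) by (field; lra).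
    nra.
Qed.

End FractalBernstein.

Theorem theorem3p9 (x : nat -> R) (N : nat) (alpha : nat -> R)
  (Hpart : is_partition x N)
  (Halpha : forall i, (1 <= i <= N)%nat -> -1 < alpha i < 1)
  (f : R -> R) (Hf : cont_on (x 0%nat) (x N) f) (l m : nat) :
  dist_to (x 0%nat) (x N) f (frat_class x N alpha l m)
  <= dist_to (x 0%nat) (x N) f (rat_class (x 0%nat) (x N) l m).
Proof.
  apply dist_to_approx.
  - left. apply part_ab. exact Hpart.
  - exact Hf.
  - intros s. apply frat_cont; assumption.
  - intros r. apply rat_cont.
  - apply rat_class_nonempty.
  - intros r Hr. apply fractal_bernstein_close; assumption.
Qed.
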